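(* Let $Y$ be a statistically compact topological space such that the diagonal $\Delta Y$ is statistically closed in $Y\times Y$, and let $X$ be an open subspace of $Y$ which is statistical sequential, not statistically compact, and such that $Y\setminus X$ consists of exactly one point. Let $f:Y\to X^s$ be the unique bijection which is the identity on $X$. Then $f$ is a statistical homeomorphism.
   Context: For $A\subseteq\mathbb{N}$ let $d_n(A)=|A\cap\{1,\dots,n\}|/n$, $\overline{d}(A)=\limsup_n d_n(A)$, $\underline{d}(A)=\liminf_n d_n(A)$, and $d(A)$ their common value when equal. A sequence in $X$ is a map from an infinite subset $M\subseteq\mathbb{N}$ into $X$, written $(x_n)_{n\in M}$; a subsequence is $(x_n)_{n\in N}$ with $N\subseteq M$ infinite. It is nonthin if $\overline{d}(M)>0$. A nonthin sequence $(x_n)_{n\in M}$ is statistically convergent to $a\in X$ if for every open $U\ni a$, $d(\{n\in M:x_n\notin U\})=0$. The statistical closure $\overline{F}^{ST}$ of $F\subseteq X$ is the set of $x\in X$ such that some nonthin sequence in $F$ is statistically convergent to $x$; $F$ is statistically closed if $\overline{F}^{ST}=F$. For a space $(X,\tau)$, $\tau_{ST}=\{F\subseteq X: X\setminus F$ is statistically closed$\}$, and $X$ is statistical sequential if $\tau=\tau_{ST}$. A topological space is statistically compact if every nonthin sequence in it has a nonthin subsequence that is statistically convergent to some point of the space; a subset is statistically compact if it is so in the subspace topology. For $(X,\tau)$ not statistically compact, the one point statistical compactification is $X^s=X\cup\{\infty^X\}$ ($\infty^X\notin X$) with topology $\tau^X_s=\tau\cup\{X^s\setminus C: C$ closed and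 statistically compact subset of $X\}$. A function is statistically continuous if it maps every nonthin sequence statistically converging to $x$ to a sequence (same index set) statistically converging to the image of $x$; a bijection $f$ is a statistical homeomorphism if $f$ and $f^{-1}$ are both statistically continuous. *)

From Stdlib Require Import Reals ClassicalEpsilon.
From Coquelicot Require Import Coquelicot.
Open Scope R_scope.

Definition is_topology {T : Type} (tau : (T -> Prop) -> Prop) : Prop :=
  tau (fun _ => True) /\
  (forall F : (T -> Prop) -> Prop, (forall U, F U -> tau U) ->
     tau (fun x => exists U, F U /\ U x)) /\
  (forall U V, tau U -> tau V -> tau (fun x => U x /\ V x)).

Definition indic (A : nat -> Prop) (k : nat) : R :=
  if excluded_middle_informative (A k) then 1 else 0.

Fixpoint cnt (A : nat -> Prop) (n : nat) : R :=
  match n with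
  | O => 0
  | S m => cnt A m + indic A (S m)
  end.

Definition dn (A : nat -> Prop) (n : nat) : R := cnt A n / INR n.

Definition upper_density (A : nat -> Prop) : Rbar := LimSup_seq (dn A).

Definition density_zero (A : nat -> Prop) : Prop := is_lim_seq (dn A) 0.

Definition infinite_nat (M : nat -> Prop) : Prop :=
  forall N : nat, exists n, (N <= n)%nat /\ M n.

(** A sequence (x_n)_{n in M} is encoded by the index set [M] and a function
    [x : nat -> T] (values outside [M] are irrelevant).  It is nonthin if
    M is infinite and has positive upper density. *)
Definition nonthin (M : nat -> Prop) : Prop :=
  infinite_nat M /\ Rbar_lt (Finite 0) (upper_density M).

Definition seq_in {T : Type} (F : T -> Prop) (M : nat -> Prop) (x : nat -> T) : Prop :=
  forall n, M n -> F (x n).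

Definition st_conv {T : Type} (tau : (T -> Prop) -> Prop)
  (M : nat -> Prop) (x : nat -> T) (a : T) : Prop :=
  nonthin M /\
  forall U, tau U -> U a -> density_zero (fun n => M n /\ ~ U (x n)).

Definition st_closure {T : Type} (tau : (T -> Prop) -> Prop) (F : T -> Prop) (a : T) : Prop :=
  exists (M : nat -> Prop) (x : nat -> T),
    nonthin M /\ seq_in F M x /\ st_conv tau M x a.

Definition st_closed {T : Type} (tau : (T -> Prop) -> Prop) (F : T -> Prop) : Prop :=
  forall a, st_closure tau F a <-> F a.

Definition tau_ST {T : Type} (tau : (T -> Prop) -> Prop) (U : T -> Prop) : Prop :=
  st_closed tau (fun x => ~ U x).

Definition st_sequential {T : Type} (tau : (T -> Prop) -> Prop) : Prop :=
  forall U, tau U <-> tau_ST tau U.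

Definition st_compact {T : Type} (tau : (T -> Prop) -> Prop) : Prop :=
  forall (M : nat -> Prop) (x : nat -> T), nonthin M ->
    exists (N : nat -> Prop) (a : T),
      (forall n, N n -> M n) /\ nonthin N /\ st_conv tau N x a.

Definition subspace {T : Type} (tau : (T -> Prop) -> Prop) (C : T -> Prop)
  (V : {x : T | C x} -> Prop) : Prop :=
  exists U, tau U /\ forall z, V z <-> U (proj1_sig z).

Definition st_compact_subset {T : Type} (tau : (T -> Prop) -> Prop) (C : T -> Prop) : Prop :=
  st_compact (subspace tau C).

Definition closed_in {T : Type} (tau : (T -> Prop) -> Prop) (C : T -> Prop) : Prop :=
  tau (fun x => ~ C x).

Definition prod_top {A B : Type} (tA : (A -> Prop) -> Prop) (tB : (B -> Prop) -> Prop)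
  (W : A * B -> Prop) : Prop :=
  forall p, W p -> exists U V, tA U /\ tB V /\ U (fst p) /\ V (snd p) /\
    forall q, U (fst q) -> V (snd q) -> W q.

Definition diagonal (T : Type) (p : T * T) : Prop := fst p = snd p.

(** one point statistical compactification X^s = X ∪ {∞}, carrier [option X]
    with [None] playing the role of ∞^X *)
Definition st_compactification {X : Type} (tau : (X -> Prop) -> Prop)
  (W : option X -> Prop) : Prop :=
  (exists U, tau U /\ ~ W None /\ forall x, W (Some x) <-> U x) \/
  (exists C, closed_in tau C /\ st_compact_subset tau C /\
     W None /\ forall x, W (Some x) <-> ~ C x).

Definition st_continuous {A B : Type} (tA : (A -> Prop) -> Prop) (tB : (B -> Prop) -> Prop)
  (f : A -> B) : Prop :=
  forall (M : nat -> Prop) (x : nat -> A) (a : A),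
    st_conv tA M x a -> st_conv tB M (fun n => f (x n)) (f a).

Definition st_homeomorphism {A B : Type} (tA : (A -> Prop) -> Prop) (tB : (B -> Prop) -> Prop)
  (f : A -> B) : Prop :=
  exists g : B -> A,
    (forall a, g (f a) = a) /\ (forall b, f (g b) = b) /\
    st_continuous tA tB f /\ st_continuous tB tA g.

Definition to_compactification {Y : Type} (Xs : Y -> Prop) (y : Y) : option {y : Y | Xs y} :=
  match excluded_middle_informative (Xs y) with
  | left h => Some (exist _ y h)
  | right _ => None
  end.

From Stdlib Require Import Reals ClassicalEpsilon.
From Coquelicot Require Import Coquelicot.
From Stdlib Require Import Classical Lra Lia ProofIrrelevance.

(* The inverse [g] of [f] sends the extra point of [Y] to [infinity]; it is
   even continuous, because the complement of an open neighbourhood of that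
   point is closed in the statistically compact space [Y] and contained in
   [X], hence a closed statistically compact subset of [X].  For [f], the only
   delicate neighbourhoods are those [X^s \ C] with [C] statistically compact:
   if a sequence converging to [a] outside [C] met [C] on a set of positive
   upper density, compactness of [C] would give a second statistical limit in
   [C] along a nonthin subsequence, contradicting the uniqueness of
   statistical limits that follows from the statistical closedness of the
   diagonal. *)

Lemma indic_bounds A k : 0 <= indic A k <= 1.
Proof. unfold indic; destruct excluded_middle_informative; lra. Qed.

Lemma cnt_ge0 A n : 0 <= cnt A n.
Proof. induction n; simpl; [lra|]. pose proof (indic_bounds A (S n)); lra. Qed.

Lemma cnt_le A n : cnt A n <= INR n.
Proof.
  induction n; [simpl; lra|].
  change (cnt A (S n)) with (cnt A n + indic A (S n)).
  pose proof (indic_bounds A (S n)). rewrite S_INR; lra.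
Qed.

Lemma cnt_mono (A B : nat -> Prop) n : (forall k, A k -> B k) -> cnt A n <= cnt B n.
Proof.
  intros HAB; induction n; simpl; [lra|].
  assert (indic A (S n) <= indic B (S n)).
  { unfold indic; do 2 destruct excluded_middle_informative; try lra.
    exfalso; auto. }
  lra.
Qed.

Lemma cnt_or (A B : nat -> Prop) n : cnt (fun k => A k \/ B k) n <= cnt A n + cnt B n.
Proof.
  induction n; simpl; [lra|].
  assert (indic (fun k => A k \/ B k) (S n) <= indic A (S n) + indic B (S n)).
  { unfold indic; repeat destruct excluded_middle_informative; try lra.
    exfalso; tauto. }
  lra.
Qed.

Lemma inv_INR_ge0 n : 0 <= / INR n.
Proof.
  destruct n; [simpl; rewrite Rinv_0; lra|].
  apply Rlt_le, Rinv_0_lt_compat, lt_0_INR; lia.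
Qed.

Lemma dn_ge0 A n : 0 <= dn A n.
Proof. apply Rmult_le_pos; [apply cnt_ge0 | apply inv_INR_ge0]. Qed.

Lemma density_zero_mono (A B : nat -> Prop) :
  (forall k, A k -> B k) -> density_zero B -> density_zero A.
Proof.
  intros HAB HB.
  apply is_lim_seq_le_le with (u := fun _ => 0) (w := dn B);
    [|apply is_lim_seq_const|exact HB].
  intros n; split; [apply dn_ge0|].
  apply Rmult_le_compat_r; [apply inv_INR_ge0 | now apply cnt_mono].
Qed.

Lemma density_zero_or (A B : nat -> Prop) :
  density_zero A -> density_zero B -> density_zero (fun k => A k \/ B k).
Proof.
  intros HA HB.
  apply is_lim_seq_le_le with (u := fun _ => 0) (w := fun n => dn A n + dn B n);
    [|apply is_lim_seq_const|].
  - intros n; split; [apply dn_ge0|]. unfold dn, Rdiv. rewrite <- Rmult_plus_distr_r.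
    apply Rmult_le_compat_r; [apply inv_INR_ge0 | apply cnt_or].
  - replace 0 with (0 + 0) by lra. now apply is_lim_seq_plus'.
Qed.

Lemma density_zero_of_finite (A : nat -> Prop) : ~ infinite_nat A -> density_zero A.
Proof.
  intros Hfin. apply not_all_ex_not in Hfin as [N HN].
  assert (Hcnt : forall n, cnt A n <= INR N).
  { induction n as [|n IH]; simpl; [apply pos_INR|].
    destruct (Compare_dec.le_lt_dec N (S n)).
    - unfold indic; destruct excluded_middle_informative; [|lra].
      exfalso; apply HN; eauto.
    - pose proof (cnt_le A (S n)).
      assert (INR (S n) <= INR N) by (apply le_INR; lia). simpl in *; lra. }
  apply is_lim_seq_le_le with (u := fun _ => 0) (w := fun n => INR N * / INR n);
    [|apply is_lim_seq_const|].
  - intros n; split; [apply dn_ge0|].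
    apply Rmult_le_compat_r; [apply inv_INR_ge0 | auto].
  - replace (Finite 0) with (Rbar_mult (INR N) 0) by (simpl; f_equal; ring).
    apply is_lim_seq_scal_l.
    replace (Finite 0) with (Rbar_inv p_infty) by reflexivity.
    apply is_lim_seq_inv; [apply is_lim_seq_INR | discriminate].
Qed.

Lemma nonthin_of_not_density_zero (A : nat -> Prop) : ~ density_zero A -> nonthin A.
Proof.
  intros Hnz. split.
  - apply NNPP; intro Hfin. apply Hnz, density_zero_of_finite, Hfin.
  - destruct (Rbar_lt_dec 0 (upper_density A)) as [h|h]; [exact h|].
    exfalso. apply Hnz. apply Rbar_not_lt_le in h.
    assert (Hinf : Rbar_le 0 (LimInf_seq (dn A))).
    { rewrite <- (LimInf_seq_const 0). apply LimInf_le.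
      exists O; intros; apply dn_ge0. }
    pose proof (LimSup_LimInf_seq_le (dn A)) as Hle. unfold upper_density in h.
    assert (Hsup0 : LimSup_seq (dn A) = Finite 0)
      by (apply Rbar_le_antisym; eauto using Rbar_le_trans).
    assert (Hinf0 : LimInf_seq (dn A) = Finite 0)
      by (apply Rbar_le_antisym; [rewrite <- Hsup0|]; auto).
    assert (Hex : ex_lim_seq (dn A)) by (apply ex_lim_LimSup_LimInf_seq; congruence).
    pose proof (Lim_seq_correct _ Hex) as Hlim.
    rewrite (is_LimSup_seq_unique _ _ (is_lim_LimSup_seq _ _ Hlim)) in Hsup0.
    unfold density_zero. rewrite <- Hsup0. exact Hlim.
Qed.

Lemma nonthin_not_density_zero (A : nat -> Prop) : nonthin A -> ~ density_zero A.
Proof.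
  intros [_ Hpos] Hz. unfold upper_density in Hpos.
  rewrite (is_LimSup_seq_unique _ _ (is_lim_LimSup_seq _ _ Hz)) in Hpos.
  simpl in Hpos; lra.
Qed.

Lemma st_conv_restrict {T} (tau : (T -> Prop) -> Prop) M N x a :
  (forall n, N n -> M n) -> nonthin N -> st_conv tau M x a -> st_conv tau N x a.
Proof.
  intros HNM HN [_ Hconv]. split; [exact HN|]. intros U HU Ua.
  apply density_zero_mono with (B := fun n => M n /\ ~ U (x n)); [|auto].
  intros n [Nn h]; auto.
Qed.

Lemma st_conv_ext {T} (tau : (T -> Prop) -> Prop) M x x' a :
  (forall n, M n -> x n = x' n) -> st_conv tau M x a -> st_conv tau M x' a.
Proof.
  intros Hxx' [HM Hconv]. split; [exact HM|]. intros U HU Ua.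
  apply density_zero_mono with (B := fun n => M n /\ ~ U (x n)); [|auto].
  intros n [Mn h]. rewrite Hxx'; auto.
Qed.

Lemma st_conv_limit_closed {T} (tau : (T -> Prop) -> Prop) M x a U :
  tau U -> (forall n, M n -> ~ U (x n)) -> st_conv tau M x a -> ~ U a.
Proof.
  intros HU Hx [HM Hconv] Ua. apply (nonthin_not_density_zero _ HM).
  apply density_zero_mono with (B := fun n => M n /\ ~ U (x n)); [|auto].
  intros n Mn; auto.
Qed.

Lemma st_conv_pair {A B} (tA : (A -> Prop) -> Prop) (tB : (B -> Prop) -> Prop) M x y a b :
  st_conv tA M x a -> st_conv tB M y b ->
  st_conv (prod_top tA tB) M (fun n => (x n, y n)) (a, b).
Proof.
  intros [HM Hx] [_ Hy]. split; [exact HM|]. intros W HW Wab.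
  destruct (HW _ Wab) as [U [V [HU [HV [Ua [Vb HUV]]]]]].
  apply density_zero_mono
    with (B := fun n => (M n /\ ~ U (x n)) \/ (M n /\ ~ V (y n))).
  - intros n [Mn nW]. destruct (classic (U (x n))); [right|left]; split; auto.
  - apply density_zero_or; auto.
Qed.

Lemma st_conv_unique {T} (tau : (T -> Prop) -> Prop) M x a b :
  st_closed (prod_top tau tau) (diagonal T) ->
  st_conv tau M x a -> st_conv tau M x b -> a = b.
Proof.
  intros Hdiag Ha Hb. apply (Hdiag (a, b)).
  exists M, (fun n => (x n, x n)). split; [exact (proj1 Ha)|]. split.
  - intros n _; reflexivity.
  - now apply st_conv_pair.
Qed.

Lemma st_conv_subspace {T} (tau : (T -> Prop) -> Prop) (C : T -> Prop) M
    (y : nat -> {t | C t}) c :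
  st_conv (subspace tau C) M y c <->
  st_conv tau M (fun n => proj1_sig (y n)) (proj1_sig c).
Proof.
  split; intros [HM Hconv]; split; auto.
  - intros U HU Uc.
    exact (Hconv (fun z => U (proj1_sig z)) (ex_intro _ U (conj HU (fun _ => iff_refl _))) Uc).
  - intros V [U [HU HVU]] Vc.
    apply density_zero_mono with (B := fun n => M n /\ ~ U (proj1_sig (y n))).
    + intros n [Mn nV]; split; auto. intro; apply nV, HVU; auto.
    + apply Hconv; [exact HU | apply HVU, Vc].
Qed.

Lemma st_continuous_of_continuous {A B} (tA : (A -> Prop) -> Prop)
    (tB : (B -> Prop) -> Prop) (f : A -> B) :
  (forall U, tB U -> tA (fun a => U (f a))) -> st_continuous tA tB f.
Proof.
  intros Hf M x a [HM Hconv]. split; [exact HM|].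
  intros U HU Ufa. exact (Hconv _ (Hf U HU) Ufa).
Qed.

Lemma exists_seq_preimage {S T} (e : S -> T) (A : nat -> Prop) (x : nat -> T) :
  inhabited S -> (forall n, A n -> exists s, e s = x n) ->
  exists s : nat -> S, forall n, A n -> e (s n) = x n.
Proof.
  intros HS Hx. exists (fun n => epsilon HS (fun s => e s = x n)).
  intros n An. exact (epsilon_spec HS _ (Hx n An)).
Qed.

Lemma st_conv_rarely_in_st_compact_image {S T} (tauS : (S -> Prop) -> Prop)
    (tau : (T -> Prop) -> Prop) (e : S -> T) M x a :
  st_closed (prod_top tau tau) (diagonal T) ->
  st_compact tauS -> st_continuous tauS tau e ->
  st_conv tau M x a -> (forall s, e s <> a) ->
  density_zero (fun n => M n /\ exists s, e s = x n).
Proof.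
  intros Hdiag HS He Hx Ha. apply NNPP. intro Hnz.
  pose proof (nonthin_of_not_density_zero _ Hnz) as HA.
  destruct (proj1 HA O) as [n0 [_ [_ [s0 _]]]].
  destruct (exists_seq_preimage e (fun n => M n /\ exists s, e s = x n) x
                (inhabits s0) (fun n An => proj2 An)) as [s Hs].
  destruct (HS _ s HA) as [N [c [HNA [HN Hsc]]]].
  apply (Ha c), (st_conv_unique tau N x); [exact Hdiag| |].
  - apply (st_conv_ext tau N (fun n => e (s n))); [|exact (He _ _ _ Hsc)].
    intros n Nn; apply Hs, HNA, Nn.
  - apply (st_conv_restrict tau M); [|exact HN|exact Hx].
    intros n Nn; apply HNA, Nn.
Qed.

Section OnePointCompactification.

Variables (Y : Type) (tauY : (Y -> Prop) -> Prop) (Xs : Y -> Prop).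

Lemma to_compactification_in y (h : Xs y) :
  to_compactification Xs y = Some (exist _ y h).
Proof.
  unfold to_compactification. destruct excluded_middle_informative as [h'|h'];
    [do 2 f_equal; apply proof_irrelevance | contradiction].
Qed.

Lemma to_compactification_out y : ~ Xs y -> to_compactification Xs y = None.
Proof.
  unfold to_compactification. destruct excluded_middle_informative; [contradiction|auto].
Qed.

Definition from_compactification (p : Y) (o : option {y | Xs y}) : Y :=
  match o with Some v => proj1_sig v | None => p end.

Lemma from_to_compactification p :
  (forall y, ~ Xs y -> y = p) ->
  forall y, from_compactification p (to_compactification Xs y) = y.
Proof.
  intros Hp y. destruct (classic (Xs y)) as [h|h].
  - now rewrite (to_compactification_in y h).
  - rewrite (to_compactification_out y h). symmetry; auto.
Qed.

Lemma to_from_compactification p :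
  ~ Xs p -> forall o, to_compactification Xs (from_compactification p o) = o.
Proof.
  intros np [[y h]|]; simpl; [apply to_compactification_in | now apply to_compactification_out].
Qed.

Lemma st_compact_closed_in_subspace U :
  st_compact tauY -> tauY U -> (forall y, ~ Xs y -> U y) ->
  st_compact (subspace (subspace tauY Xs) (fun v => ~ U (proj1_sig v))).
Proof.
  intros HY HU HUXs M y HM.
  destruct (HY M (fun n => proj1_sig (proj1_sig (y n))) HM) as [N [a [HNM [HN Ha]]]].
  assert (na : ~ U a)
    by exact (st_conv_limit_closed tauY N _ a U HU (fun n _ => proj2_sig (y n)) Ha).
  assert (ha : Xs a) by (apply NNPP; intro; apply na, HUXs; assumption).
  exists N, (exist _ (exist _ a ha) na). split; [exact HNM|]. split; [exact HN|].
  now do 2 apply st_conv_subspace.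
Qed.

Lemma continuous_from_compactification p :
  st_compact tauY -> (forall y, ~ Xs y -> y = p) ->
  forall U, tauY U ->
  st_compactification (subspace tauY Xs) (fun o => U (from_compactification p o)).
Proof.
  intros HY Hp U HU. destruct (classic (U p)) as [Up|nUp].
  - right. exists (fun v => ~ U (proj1_sig v)). split; [|split; [|split]].
    + exists U. split; [exact HU|]. intros z; split; [apply NNPP | auto].
    + apply st_compact_closed_in_subspace; [exact HY | exact HU|].
      intros y ny; rewrite (Hp y ny); exact Up.
    + exact Up.
    + intros v; simpl; split; [auto | apply NNPP].
  - left. exists (fun v => U (proj1_sig v)). split; [|split].
    + exists U; split; [exact HU | reflexivity].
    + exact nUp.
    + reflexivity.
Qed.

Lemma st_continuous_to_compactification :
  st_closed (prod_top tauY tauY) (diagonal Y) -> tauY Xs ->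
  st_continuous tauY (st_compactification (subspace tauY Xs)) (to_compactification Xs).
Proof.
  intros Hdiag HXs M x a Hx. split; [exact (proj1 Hx)|]. intros W HW Wa.
  destruct HW as [[U [[U0 [HU0 HUU0]] [nWNone HWU]]] | [C [_ [HC [WNone HWC]]]]].
  - destruct (classic (Xs a)) as [ha|ha];
      [|rewrite (to_compactification_out a ha) in Wa; contradiction nWNone].
    rewrite (to_compactification_in a ha) in Wa.
    apply density_zero_mono
      with (B := fun n => (M n /\ ~ Xs (x n)) \/ (M n /\ ~ U0 (x n))).
    + intros n [Mn nW]. destruct (classic (Xs (x n))) as [h|h]; [right|left]; split; auto.
      rewrite (to_compactification_in _ h) in nW.
      intro; apply nW, HWU, HUU0; assumption.
    + apply density_zero_or; apply (proj2 Hx); [exact HXs | exact ha | exact HU0 |].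
      apply (HUU0 (exist _ a ha)), HWU, Wa.
  - apply density_zero_mono
      with (B := fun n => M n /\ exists s : {v | C v}, proj1_sig (proj1_sig s) = x n).
    + intros n [Mn nW]. split; [exact Mn|]. destruct (classic (Xs (x n))) as [h|h].
      * rewrite (to_compactification_in _ h) in nW.
        exists (exist C (exist _ (x n) h) (NNPP _ (fun nC => nW (proj2 (HWC _) nC)))).
        reflexivity.
      * rewrite (to_compactification_out _ h) in nW. contradiction.
    + apply (st_conv_rarely_in_st_compact_image _ tauY _ M x a Hdiag HC); [|exact Hx|].
      * intros N s c Hs. apply (st_conv_subspace tauY Xs), (st_conv_subspace _ C), Hs.
      * intros [[b hb] hc] Hba; simpl in Hba; subst a.
        rewrite (to_compactification_in b hb) in Wa. now apply HWC in Wa.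
Qed.

End OnePointCompactification.

Theorem mainTheorem20 (Y : Type) (tauY : (Y -> Prop) -> Prop) (Xs : Y -> Prop) :
  is_topology tauY ->
  st_compact tauY ->
  st_closed (prod_top tauY tauY) (diagonal Y) ->
  tauY Xs ->
  st_sequential (subspace tauY Xs) ->
  ~ st_compact (subspace tauY Xs) ->
  (exists p : Y, ~ Xs p /\ forall y, ~ Xs y -> y = p) ->
  st_homeomorphism tauY (st_compactification (subspace tauY Xs))
    (to_compactification Xs).
Proof.
  intros _ HY Hdiag HXs _ _ [p [np Hp]].
  exists (from_compactification Y Xs p). split; [|split; [|split]].
  - exact (from_to_compactification Y Xs p Hp).
  - exact (to_from_compactification Y Xs p np).
  - exact (st_continuous_to_compactification Y tauY Xs Hdiag HXs).
  - apply st_continuous_of_continuous.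
    exact (continuous_from_compactification Y tauY Xs p HY Hp).
Qed.
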